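(* Let $H$ be a monoid, let $a,c\in H$ and $b,d\in\mathrm{Gpr}\,H$ be such that for every $e\in\mathrm{Gpr}\,H$: if $e\mid ab$ then $e\mid b$, and if $e\mid cd$ then $e\mid d$. If $ab\sim cd$, then $a\sim c$ and $b\sim d$.
   Context: A monoid means a commutative cancellative monoid (written multiplicatively); $H^{\ast}$ is its unit group. $x\sim y$ means $x=uy$ for some $u\in H^{\ast}$. $\mathrm{Gpr}\,H$ is the set of radical generators of $H$: elements $r$ such that for all $b\in H$, $n\in\mathbb{N}$, $r\mid b^n$ implies $r\mid b$. *)

From Stdlib Require Import Arith.

Record CCMonoid := {
  carrier :> Type;
  mul : carrier -> carrier -> carrier;
  one : carrier;
  mul_assoc : forall x y z, mul x (mul y z) = mul (mul x y) z;
  mul_comm : forall x y, mul x y = mul y x;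
  mul_one : forall x, mul x one = x;
  mul_cancel : forall x y z, mul x y = mul x z -> y = z
}.

Arguments mul {c} x y.
Arguments one {c}.

Definition divides {H : CCMonoid} (x y : H) : Prop := exists z : H, y = mul x z.

Definition is_unit {H : CCMonoid} (u : H) : Prop := exists v : H, mul u v = one.

Definition assoc {H : CCMonoid} (x y : H) : Prop :=
  exists u : H, is_unit u /\ x = mul u y.

Fixpoint pow {H : CCMonoid} (b : H) (n : nat) : H :=
  match n with
  | 0 => one
  | S n => mul b (pow b n)
  end.

Definition Gpr {H : CCMonoid} (r : H) : Prop :=
  forall (b : H) (n : nat), 1 <= n -> divides r (pow b n) -> divides r b.

(* Since ab ~ cd, the element b divides cd and d divides ab.  Applying the
   hypothesis to the radical generators e = b and e = d turns these into
   b | d and d | b, so b ~ d by cancellativity; cancelling b ~ d from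
   ab ~ cd then leaves a ~ c. *)

Section Associates.

Variable H : CCMonoid.
Implicit Types a b c d u v w x y z : H.

Lemma mul_1l x : mul one x = x.
Proof. rewrite mul_comm. apply mul_one. Qed.

Lemma mul_left_comm x y z : mul x (mul y z) = mul y (mul x z).
Proof. rewrite !mul_assoc, (mul_comm H x y). reflexivity. Qed.

Lemma is_unit_mul u v : is_unit u -> is_unit v -> is_unit (mul u v).
Proof.
  intros [u' Hu] [v' Hv]. exists (mul u' v').
  rewrite <- mul_assoc, (mul_left_comm v), Hv, mul_one. exact Hu.
Qed.

Lemma assoc_sym x y : assoc x y -> assoc y x.
Proof.
  intros [u [[v Huv] ->]]. exists v. split.
  - exists u. rewrite mul_comm. exact Huv.
  - rewrite mul_assoc, (mul_comm H v u), Huv, mul_1l. reflexivity.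
Qed.

Lemma divides_mull x y : divides y (mul x y).
Proof. exists x. apply mul_comm. Qed.

Lemma divides_assoc z x y : divides z x -> assoc y x -> divides z y.
Proof.
  intros [w ->] [u [_ ->]]. exists (mul u w). apply mul_left_comm.
Qed.

Lemma divides_antisym x y : divides x y -> divides y x -> assoc x y.
Proof.
  intros [s Hy] [t Hx]. exists t. split.
  - exists s. apply (mul_cancel H x).
    rewrite mul_one, mul_left_comm, <- Hy, mul_comm.
    symmetry. exact Hx.
  - rewrite mul_comm. exact Hx.
Qed.

Lemma assoc_cancel a b c d :
  assoc (mul a b) (mul c d) -> assoc b d -> assoc a c.
Proof.
  intros [u [Hu Habcd]] [w [[z Hwz] Hb]]. exists (mul u z). split.
  - apply is_unit_mul; [exact Hu | exists w; rewrite mul_comm; exact Hwz].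
  - assert (Haw : mul a w = mul u c).
    { apply (mul_cancel H d).
      rewrite (mul_comm H d), <- mul_assoc, <- Hb, Habcd, (mul_comm H c d).
      apply mul_left_comm. }
    rewrite <- (mul_one H a), <- Hwz, mul_assoc, Haw, <- !mul_assoc,
      (mul_comm H c z).
    reflexivity.
Qed.

End Associates.

Theorem proposition5p1 (H : CCMonoid) (a b c d : H) :
  Gpr b -> Gpr d ->
  (forall e : H, Gpr e ->
     (divides e (mul a b) -> divides e b) /\ (divides e (mul c d) -> divides e d)) ->
  assoc (mul a b) (mul c d) ->
  assoc a c /\ assoc b d.
Proof.
  intros Gb Gd Hrad Habcd.
  assert (Hbd : assoc b d).
  { apply divides_antisym.
    - apply (proj2 (Hrad b Gb)), (divides_assoc _ b (mul a b)).
      + apply divides_mull.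
      + apply assoc_sym, Habcd.
    - apply (proj1 (Hrad d Gd)), (divides_assoc _ d (mul c d)).
      + apply divides_mull.
      + exact Habcd. }
  split; [apply (assoc_cancel _ a b c d) |]; assumption.
Qed.
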